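(* Let $\Gamma$ be a connected highly-regular graph. Then $\mathrm{I}(\Gamma)=\operatorname{diam}(\Gamma)+1$ if and only if $\Gamma$ is distance-regular.
   Context: All graphs are finite, undirected, without loops or multiple edges; $d(u,v)$, $\operatorname{diam}(\Gamma)$ and $D_i(u)=\{v:d(u,v)=i\}$ denote graph distance, diameter and distance spheres. A graph $\Gamma$ of order $n$ is highly-regular with collapsed adjacency matrix (CAM) $C=[c_{i,j}]_{1\le i,j\le m}$, where $2\le m<n$ (the value $m=n$ is allowed only when $n=2$), if for every vertex $u$ there is a partition of $V(\Gamma)$ into nonempty sets $V_1(u)=\{u\},V_2(u),\dots,V_m(u)$ such that for all $i,j$, every vertex $y\in V_j(u)$ is adjacent to exactly $c_{i,j}$ vertices of $V_i(u)$. The index $\mathrm{I}(\Gamma)$ of a highly-regular graph $\Gamma$ is the least $m$ such that $\Gamma$ is highly-regular with some CAM of size $m\times m$. A connected graph $\Gamma$ is distance-regular if for all $u,v$ the numbers $|D_1(v)\cap D_{i-1}(u)|$, $|D_1(v)\cap D_i(u)|$, $|D_1(v)\cap D_{i+1}(u)|$ depend only on $i=d(u,v)$. *)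

From mathcomp Require Import all_boot all_order all_algebra.
Set Implicit Arguments. Unset Strict Implicit. Unset Printing Implicit Defensive.

Section Graphs.
Variable T : finType.
Variable e : rel T.

Definition simple_graph : Prop := symmetric e /\ irreflexive e.

Fixpoint nstep (k : nat) (u v : T) : bool :=
  match k with
  | 0 => u == v
  | k'.+1 => [exists w, e u w && nstep k' w v]
  end.

(* graph distance: least k with a walk of length k (meaningful for connected graphs,
   where it is < #|T|) *)
Definition dist (u v : T) : nat := find (fun k => nstep k u v) (iota 0 #|T|).

Definition connected_graph : Prop := forall u v : T, connect e u v.

Definition diam : nat := \max_(u : T) \max_(v : T) dist u v.

Definition sphere (i : nat) (u : T) : {set T} := [set v | dist u v == i].

Definition nbhd (y : T) : {set T} := [set x | e y x].

(* Gamma is highly-regular with CAM C of size m x m.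
   p u y is the index (0-based) of the class V_(p u y + 1)(u) containing y. *)
Definition hr_with_cam (m : nat) (C : 'M[nat]_m) : Prop :=
  [/\ 2 <= m, m <= #|T|, (m = #|T| -> #|T| = 2) &
   exists p : T -> T -> 'I_m,
     forall u : T,
       [/\ forall y : T, (val (p u y) == 0) = (y == u),
           forall i : 'I_m, exists y : T, p u y = i &
           forall (i j : 'I_m) (y : T), p u y = j ->
             #|nbhd y :&: [set x | p u x == i]| = C i j]].

Definition hr_size (m : nat) : Prop := exists C : 'M[nat]_m, hr_with_cam C.

Definition highly_regular : Prop := exists m : nat, hr_size m.

Definition index_is (m : nat) : Prop :=
  hr_size m /\ forall k : nat, k < m -> ~ hr_size k.

Definition distance_regular : Prop :=
  connected_graph /\
  forall u v u' v' : T, dist u v = dist u' v' ->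
    let i := dist u v in
    [/\ #|nbhd v :&: [set w | (0 < i) && (dist u w == i.-1)]|
          = #|nbhd v' :&: [set w | (0 < i) && (dist u' w == i.-1)]|,
        #|nbhd v :&: sphere i u| = #|nbhd v' :&: sphere i u'| &
        #|nbhd v :&: sphere i.+1 u| = #|nbhd v' :&: sphere i.+1 u'| ].

End Graphs.

From mathcomp Require Import all_boot all_order all_algebra.
From mathcomp Require Import zify.
Set Implicit Arguments. Unset Strict Implicit. Unset Printing Implicit Defensive.

(* For any CAM partition, the distance d(u, y) depends only on the class of y:
   following a shortest path back from y, a positive CAM entry forces a vertex
   in the same class relative to u' to have a neighbour in the class of the
   predecessor, so induction on d(u, y) applies.  Distances 0 .. d(u, v) then
   occupy distinct classes, whence diam < m for every CAM size m.  If
   m = diam + 1, the classes of an endpoint of a diameter are its distance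
   spheres, so the class of y relative to any u is determined by d(u, y) and
   the intersection numbers are sums of CAM entries.  Conversely, in a
   distance-regular graph every vertex has eccentricity diam and the distance
   partition is a CAM of size diam + 1. *)

Section Distance.
Variables (T : finType) (e : rel T).
Hypothesis sym_e : symmetric e.
Hypothesis econn : connected_graph e.

Lemma nstepSr k u v : nstep e k.+1 u v = [exists w, nstep e k u w && e w v].
Proof.
elim: k u => [|k IH] u.
  apply/existsP/existsP => [[w /andP[euw /eqP <-]]|[w /andP[/eqP <- euv]]].
    by exists u; rewrite /= eqxx euw.
  by exists v; rewrite /= euv eqxx.
transitivity [exists w, e u w && [exists x, nstep e k w x && e x v]].
  by apply: eq_existsb => w; rewrite -IH.
apply/existsP/existsP => [[w /andP[euw /existsP[x /andP[nk exv]]]]|[x /andP[nk exv]]].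
  by exists x; rewrite exv andbT; apply/existsP; exists w; apply/andP.
have /existsP[w /andP[euw nk']] := nk.
by exists w; rewrite euw; apply/existsP; exists x; apply/andP.
Qed.

Lemma nstep_path u s : path e u s -> nstep e (size s) u (last u s).
Proof.
elim: s u => [|x s IH] u /=; first by rewrite eqxx.
by case/andP=> eux ps; apply/existsP; exists x; rewrite eux IH.
Qed.

Lemma has_nstep u v : has (fun k => nstep e k u v) (iota 0 #|T|).
Proof.
have /connectP[s ps ->] := econn u v.
have [s' ps' us' _] := shortenP ps.
apply/hasP; exists (size s'); last exact: nstep_path.
by rewrite mem_iota /=; have := max_card (mem (u :: s')); rewrite (card_uniqP us').
Qed.

Lemma dist_lt_card u v : dist e u v < #|T|.
Proof. by have := has_nstep u v; rewrite has_find size_iota. Qed.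

Lemma nstep_dist u v : nstep e (dist e u v) u v.
Proof. by have := nth_find 0 (has_nstep u v); rewrite nth_iota ?dist_lt_card. Qed.

Lemma dist_min u v k : nstep e k u v -> dist e u v <= k.
Proof.
move=> nk; rewrite leqNgt; apply/negP => lt_k.
have kT : k < #|T| := ltn_trans lt_k (dist_lt_card u v).
by have := before_find 0 lt_k; rewrite nth_iota // nk.
Qed.

Lemma distxx u : dist e u u = 0.
Proof. by apply/eqP; rewrite -leqn0; apply: dist_min; rewrite /= eqxx. Qed.

Lemma dist_eq0 u v : dist e u v = 0 -> u = v.
Proof. by move=> d0; have := nstep_dist u v; rewrite d0 => /eqP. Qed.

Lemma dist_edge u x y : e x y -> dist e u y <= (dist e u x).+1.
Proof.
move=> exy; apply: dist_min; rewrite nstepSr.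
by apply/existsP; exists x; rewrite exy nstep_dist.
Qed.

Lemma dist_pred u y k : dist e u y = k.+1 -> exists2 x, e x y & dist e u x = k.
Proof.
move=> dk; have := nstep_dist u y; rewrite dk nstepSr => /existsP[x /andP[nk exy]].
exists x => //; have := dist_min nk; have := dist_edge u exy; rewrite dk; lia.
Qed.

Lemma dist_attained u v d : d <= dist e u v -> exists w, dist e u w = d.
Proof.
move Hk: (dist e u v - d) => k; elim: k v Hk => [|k IH] v dk dle.
  by exists v; apply/eqP; rewrite eqn_leq dle -subn_eq0 dk.
have [x _ dx] : exists2 x, e x v & dist e u x = (dist e u v).-1.
  by apply: dist_pred; rewrite prednK //; lia.
by apply: (IH x); rewrite dx; lia.
Qed.

Lemma dist_le_diam u v : dist e u v <= diam e.
Proof.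
apply: leq_trans (leq_bigmax (F := fun v => dist e u v) v) _.
exact: (leq_bigmax (F := fun u => \max_v dist e u v) u).
Qed.

Lemma diam_attained : 0 < #|T| -> exists a b, dist e a b = diam e.
Proof.
move=> T0; have [a Ha] := eq_bigmax (fun u => \max_v dist e u v) T0.
have [b Hb] := eq_bigmax (fun v => dist e a v) T0.
by exists a, b; rewrite /diam Ha Hb.
Qed.

Lemma nbhd_sphere_eq0 u y i :
  (i.+1 < dist e u y) || ((dist e u y).+1 < i) -> nbhd e y :&: sphere e i u = set0.
Proof.
move=> far; apply/setP => x; rewrite !inE; apply/negbTE/andP => -[eyx /eqP dx].
have := dist_edge u eyx; have := dist_edge u (x := x) (y := y); rewrite sym_e eyx dx.
by move=> /(_ isT); move: far; lia.
Qed.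

End Distance.

Section EquitablePartition.
Variables (T : finType) (e : rel T).
Hypothesis sym_e : symmetric e.
Hypothesis econn : connected_graph e.
Variables (m : nat) (C : 'M[nat]_m) (p : T -> T -> 'I_m).
Hypothesis p0 : forall u y, (val (p u y) == 0) = (y == u).
Hypothesis p_surj : forall u (i : 'I_m), exists y, p u y = i.
Hypothesis p_cam : forall u (i j : 'I_m) y, p u y = j ->
  #|nbhd e y :&: [set x | p u x == i]| = C i j.

Lemma class_nbhd u u' x y y' : p u y = p u' y' -> e x y ->
  exists2 x', e x' y' & p u' x' = p u x.
Proof.
move=> puy exy.
have : 0 < #|nbhd e y' :&: [set z | p u' z == p u x]|.
  rewrite (p_cam (p u x) (esym puy)) -(p_cam (p u x) (erefl (p u y))).
  by apply/card_gt0P; exists x; rewrite !inE sym_e exy eqxx.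
by case/card_gt0P => x'; rewrite !inE sym_e => /andP[ex'y' /eqP]; exists x'.
Qed.

Lemma dist_class_le u u' y y' : p u y = p u' y' -> dist e u' y' <= dist e u y.
Proof.
move Hn: (dist e u y) => n; elim: n u u' y y' Hn => [|n IH] u u' y y' duy puy.
  move: duy => /(dist_eq0 econn) yu; subst y.
  have := p0 u' y'; rewrite -puy p0 eqxx => /esym/eqP ->.
  by rewrite distxx.
have [x exy dux] := dist_pred econn duy.
have [x' ex'y' px'] := class_nbhd puy exy.
by apply: leq_trans (dist_edge econn u' ex'y') _; rewrite ltnS (IH u u' x x').
Qed.

Lemma dist_class u u' y y' : p u y = p u' y' -> dist e u y = dist e u' y'.
Proof. by move=> puy; apply/eqP; rewrite eqn_leq !dist_class_le. Qed.

Definition class_rep u (i : 'I_m) : T := odflt u [pick y | p u y == i].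

Lemma class_repP u i : p u (class_rep u i) = i.
Proof.
rewrite /class_rep; case: pickP => [y /eqP //|none].
by have [y py] := p_surj u i; move: (none y); rewrite py eqxx.
Qed.

Definition class_dist u (i : 'I_m) : nat := dist e u (class_rep u i).

Lemma class_distE u u' y : class_dist u (p u' y) = dist e u' y.
Proof. exact/dist_class/class_repP. Qed.

Lemma iota_sub_class_dist u v :
  {subset iota 0 (dist e u v).+1 <= [seq class_dist u i | i <- enum 'I_m]}.
Proof.
move=> d; rewrite mem_iota ltnS => /andP[_ /(dist_attained econn)[w <-]].
by apply/mapP; exists (p u w); rewrite ?mem_enum ?class_distE.
Qed.

Lemma dist_lt_index u v : dist e u v < m.
Proof.
have /(uniq_leq_size (iota_uniq _ _)) := @iota_sub_class_dist u v.
by rewrite size_iota size_map size_enum_ord.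
Qed.

Lemma card_nbhd_classes (P : pred 'I_m) u v :
  #|nbhd e v :&: [set w | P (p u w)]| = \sum_(i | P i) C i (p u v).
Proof.
rewrite -sum1_card (partition_big (p u) P); last by move=> w; rewrite !inE => /andP[].
apply: eq_bigr => i Pi; rewrite -(p_cam i (erefl (p u v))) -sum1_card.
apply: eq_bigl => w; rewrite !inE.
by case: (p u w =P i) => [->|]; rewrite ?Pi ?andbT ?andbF.
Qed.

Lemma class_dist_inj u v : dist e u v = m.-1 -> injective (class_dist u).
Proof.
move=> duv; apply/injectiveP; rewrite /injectiveb /dinjectiveb.
apply: (leq_size_uniq (iota_uniq 0 m)); last by rewrite size_map size_enum_ord size_iota.
have m0 : 0 < m by rewrite -ltn_predL -duv dist_lt_index.
by move=> d; rewrite -{1}(prednK m0) -duv; apply: iota_sub_class_dist.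
Qed.

Section MinimalIndex.
Variables a b : T.
Hypothesis dab : dist e a b = m.-1.

Lemma class_of_dist u v u' v' : dist e u v = dist e u' v' -> p u v = p u' v'.
Proof. by move=> duv; apply: (class_dist_inj dab); rewrite !class_distE. Qed.

Lemma card_nbhd_dist (Q : pred nat) u v u' v' : dist e u v = dist e u' v' ->
  #|nbhd e v :&: [set x | Q (dist e u x)]| = #|nbhd e v' :&: [set x | Q (dist e u' x)]|.
Proof.
pose P i := Q (class_dist a i).
have by_class z w : nbhd e w :&: [set x | Q (dist e z x)] = nbhd e w :&: [set x | P (p z x)].
  by apply/setP => x; rewrite !inE /P class_distE.
by move=> /class_of_dist puv; rewrite !by_class !(card_nbhd_classes P) puv.
Qed.

End MinimalIndex.
End EquitablePartition.

Lemma hr_with_cam_classes (T : finType) (e : rel T) m (C : 'M[nat]_m) :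
  hr_with_cam e C -> exists p : T -> T -> 'I_m,
  [/\ forall u y, (val (p u y) == 0) = (y == u),
      forall u (i : 'I_m), exists y, p u y = i &
      forall u (i j : 'I_m) y, p u y = j -> #|nbhd e y :&: [set x | p u x == i]| = C i j].
Proof.
case=> _ _ _ [p cam]; exists p.
by split=> u; case: (cam u).
Qed.

Lemma diam_lt_of_hr_with_cam (T : finType) (e : rel T) m (C : 'M[nat]_m) :
  symmetric e -> connected_graph e -> hr_with_cam e C -> diam e < m.
Proof.
move=> sym_e econn camC; have [m2 _ _ _] := camC.
have [p [p0 p_surj p_cam]] := hr_with_cam_classes camC.
have m0 : 0 < m by apply: leq_trans m2.
rewrite -(prednK m0) ltnS; apply/bigmax_leqP => u _; apply/bigmax_leqP => v _.
by rewrite -ltnS prednK // (dist_lt_index sym_e econn p0 p_surj p_cam).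
Qed.

Lemma distance_regular_of_hr_with_cam (T : finType) (e : rel T) (C : 'M[nat]_((diam e).+1)) :
  symmetric e -> connected_graph e -> hr_with_cam e C -> distance_regular e.
Proof.
move=> sym_e econn camC; have [m2 mT _ _] := camC.
have [p [p0 p_surj p_cam]] := hr_with_cam_classes camC.
have [a [b dab]] := diam_attained e (leq_ltn_trans (leq0n _) mT).
have card_eq := card_nbhd_dist sym_e econn p0 p_surj p_cam dab.
split=> // u v u' v' duv; split.
- exact: (card_eq (fun d => (0 < dist e u v) && (d == (dist e u v).-1))).
- exact: (card_eq (pred1 (dist e u v))).
- exact: (card_eq (pred1 (dist e u v).+1)).
Qed.

Section DistanceRegular.
Variables (T : finType) (e : rel T).
Hypothesis sym_e : symmetric e.
Hypothesis dr : distance_regular e.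
Let econn : connected_graph e := dr.1.

Lemma dr_card_nbhd_sphere i u y u' y' : dist e u y = dist e u' y' ->
  #|nbhd e y :&: sphere e i u| = #|nbhd e y' :&: sphere e i u'|.
Proof.
move=> duy; have [c_eq a_eq b_eq] := dr.2 u y u' y' duy.
case: (eqVneq i (dist e u y)) => [-> //|ne_a].
case: (eqVneq i (dist e u y).+1) => [-> //|ne_b].
case: (eqVneq i.+1 (dist e u y)) => [dSi|ne_c].
  have prev_sphere z : [set w | (0 < dist e u y) && (dist e z w == (dist e u y).-1)] = sphere e i z.
    by apply/setP => w; rewrite !inE -dSi.
  by rewrite !prev_sphere in c_eq.
rewrite !nbhd_sphere_eq0 // -?duy; move: ne_a ne_b ne_c => /eqP ? /eqP ? /eqP ?; lia.
Qed.

Lemma dr_dist_attained u d : d <= diam e -> exists y, dist e u y = d.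
Proof.
have T0 : 0 < #|T| by apply/card_gt0P; exists u.
have [a [b dab]] := diam_attained e T0.
elim: d => [_|d IH dS]; first by exists u; rewrite distxx.
have [w daw] : exists w, dist e a w = d.+1.
  by apply: (dist_attained econn (v := b)); rewrite dab.
have [x exw dax] := dist_pred econn daw.
have [w' duw'] := IH (ltnW dS).
have : 0 < #|nbhd e w' :&: sphere e d.+1 u|.
  rewrite -(dr_card_nbhd_sphere _ (etrans dax (esym duw'))).
  by apply/card_gt0P; exists w; rewrite !inE exw daw eqxx.
by case/card_gt0P => y; rewrite !inE => /andP[_ /eqP]; exists y.
Qed.

Variable a : T.

Definition dist_rep (j : nat) : T := odflt a [pick y | dist e a y == j].

Lemma dist_repP j : j <= diam e -> dist e a (dist_rep j) = j.
Proof.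
move=> jd; rewrite /dist_rep; case: pickP => [y /eqP //|none].
by have [y dy] := dr_dist_attained a jd; move: (none y); rewrite dy eqxx.
Qed.

Definition distance_cam : 'M[nat]_((diam e).+1) :=
  \matrix_(i, j) #|nbhd e (dist_rep j) :&: sphere e i a|.

Lemma hr_with_distance_cam :
  2 <= (diam e).+1 -> (diam e).+1 <= #|T| -> ((diam e).+1 = #|T| -> #|T| = 2) ->
  hr_with_cam e distance_cam.
Proof.
have dist_lt u y : dist e u y < (diam e).+1 by rewrite ltnS dist_le_diam.
move=> d2 dT dT2; split=> //; exists (fun u y => inord (dist e u y)) => u; split.
- move=> y /=; rewrite inordK //.
  by apply/eqP/eqP => [/(dist_eq0 econn) ->|->]; rewrite ?distxx.
- move=> i; have [y dy] := dr_dist_attained u (ltn_ord i : i <= diam e).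
  by exists y; apply: val_inj; rewrite /= dy inordK.
- move=> i j y <-; rewrite mxE.
  have -> : [set x | inord (dist e u x) == i] = sphere e i u.
    by apply/setP => x; rewrite /sphere !inE -(inj_eq val_inj) /= inordK.
  by apply: dr_card_nbhd_sphere; rewrite inordK // dist_repP // dist_le_diam.
Qed.

End DistanceRegular.

(* The hypothesis [hr_size e m] only supplies the size side conditions of
   [hr_with_cam]: a path on n >= 3 vertices is distance-regular but has no CAM. *)
Lemma hr_size_diam_of_dr (T : finType) (e : rel T) m :
  symmetric e -> distance_regular e -> hr_size e m -> hr_size e (diam e).+1.
Proof.
move=> sym_e dr [C camC]; have [m2 mT mT2 _] := camC.
have diam_lt := diam_lt_of_hr_with_cam sym_e dr.1 camC.
have /card_gt1P[x [y [_ _ xy]]] : 1 < #|T| := leq_trans m2 mT.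
exists (distance_cam e x); apply: (hr_with_distance_cam sym_e dr).
- rewrite ltnS (leq_trans _ (dist_le_diam e x y)) // lt0n.
  by apply/eqP => /(dist_eq0 dr.1) x_y; rewrite x_y eqxx in xy.
- exact: leq_trans mT.
- by move=> dT; apply: mT2; apply/eqP; rewrite eqn_leq mT -dT.
Qed.

Unset Implicit Arguments.

Theorem corollary3p2 (T : finType) (e : rel T) :
  simple_graph e -> connected_graph e -> highly_regular e ->
  (index_is e (diam e).+1 <-> distance_regular e).
Proof.
move=> [sym_e _] econn [m hr_m]; split=> [[[C camC] _]|dr].
  exact: distance_regular_of_hr_with_cam sym_e econn camC.
split=> [|k k_lt [C camC]]; first exact: hr_size_diam_of_dr sym_e dr hr_m.
by have := diam_lt_of_hr_with_cam sym_e econn camC; rewrite ltnNge -ltnS k_lt.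
Qed.
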